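(* Let $I$ be a resident-minimal instance and $(P,X)$ a (general) prescription for $I$. Then there is a resident-changeless and hospital-complete extension $I'$ of $I$ such that $(P,Y)$, where $Y=X\setminus\mathrm{rej}(I')$, is a prescription for $I'$.
   Context: An instance $I$ consists of finite disjoint sets $R$ (residents) and $H$ (hospitals), a positive integer quota $q_h$ for each $h\in H$, for each $r\in R$ a preference list of $r$ (a sequence of distinct members of $H$, not necessarily all), and for each $h\in H$ a preference list of $h$ (a sequence of distinct members of $R$). A list is complete if it contains every member of the opposite side; an instance is hospital-complete if every hospital's list is complete. A match is a pair $(r,h)\in R\times H$. For a set $M$ of matches, $\mathrm{res}_h M=\{r:(r,h)\in M\}$, $\mathrm{res}\,M=\{r:(r,h)\in M\text{ for some }h\}$. $J$ is an extension of $I$ (same $R,H$, quotas) if every list of $J$ has the corresponding list of $I$ as a prefix; it is resident-changeless if every resident's list is the same in $I$ and $J$. An event is $(r,h)^+$ (proposal) or $(r,h)^-$ (rejection). For an event sequence $\sigma$, $\mathrm{prop}(\sigma)$, $\mathrm{rej}(\sigma)$ are the sets of matches proposed/rejected in $\sigma$, $\mathrm{tent}(\sigma)=\mathrm{prop}(\sigma)\setminus\mathrm{rej}(\sigma)$, and $\mathrm{pend}_I(\sigma)$ is the set of $(r,h)\in\mathrm{tent}(\sigma)$ with $r$ not on the list of $h$ in $I$. A match $(r,h)\in M$ is ousted from $M$ in $I$ if the list of $h$ in $I$ contains at least $q_h$ residents of $\mathrm{res}_h M$ and either $r$ is not on it or $r$ is preceded on it by at least $q_h$ residents of $\mathrm{res}_h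 M$. $I$-feasible sequences: the empty sequence is $I$-feasible; if $\sigma$ is $I$-feasible then $\sigma+(r,h)^+$ is $I$-feasible if $r\notin\mathrm{res}\,\mathrm{tent}(\sigma)$, $(r,h)\notin\mathrm{prop}(\sigma)$, $h$ is on the list of $r$ in $I$ and $(r,h')\in\mathrm{rej}(\sigma)$ for every $h'$ preceding $h$ on it; and $\sigma+(r,h)^-$ is $I$-feasible if $(r,h)$ is ousted from $\mathrm{prop}(\sigma)$ in $I$ and $(r,h)\notin\mathrm{rej}(\sigma)$. All maximal $I$-feasible sequences contain the same events; $\mathrm{prop}(I),\mathrm{rej}(I),\mathrm{tent}(I),\mathrm{pend}(I)$ denote $\mathrm{prop}(\sigma),\mathrm{rej}(\sigma),\mathrm{tent}(\sigma),\mathrm{pend}_I(\sigma)$ for any maximal $I$-feasible $\sigma$. $I$ is resident-minimal if $\mathrm{prop}(I)$ equals the set of matches $(r,h)$ with $h$ on the list of $r$ in $I$. For a resident-minimal instance $I$, a (general) prescription for $I$ is a pair $(P,X)$ of sets of matches such that: (P1) $P\cap\mathrm{prop}(I)=\emptyset$; (P2) for each $r\in R$ there is at most one $h$ with $(r,h)\in P$; (P3) $X\subseteq\mathrm{tent}(I)$; (P4) $\mathrm{res}\,P\cap\mathrm{res}\,\mathrm{tent}(I)\subseteq\mathrm{res}\,X$; (P5) for each $h$, $|\mathrm{res}_h(P\cup(\mathrm{tent}(I)\setminus X))|\le q_h$, with equality if $\mathrm{res}_h X\ne\emptyset$; (P6') for each $h$, every member of $\mathrm{res}_h(P\cup((\mathrm{tent}(I)\setminus\mathrm{pend}(I))\setminus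 X))$ precedes all members of $\mathrm{res}_h(X\setminus\mathrm{pend}(I))$ in the list of $h$ in $I$, and if $\mathrm{res}_h(X\setminus\mathrm{pend}(I))\ne\emptyset$ then $\mathrm{res}_h\,\mathrm{pend}(I)\subseteq\mathrm{res}_h X$. When $I$ is hospital-complete (so $\mathrm{pend}(I)=\emptyset$), a prescription for $I$ is such a pair with (P6') read as (P6): every member of $\mathrm{res}_h(P\cup(\mathrm{tent}(I)\setminus X))$ precedes all members of $\mathrm{res}_h X$ in the list of $h$ in $I$. *)

From mathcomp Require Import all_boot.
From Stdlib Require Import ClassicalEpsilon.

Set Implicit Arguments.
Unset Strict Implicit.
Unset Printing Implicit Defensive.

(* An instance over residents R and hospitals H (quotas are a separate
   parameter q : H -> nat, shared by an instance and its extensions). *)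
Record instance (R H : Type) := Inst {
  rlist : R -> seq H;
  hlist : H -> seq R
}.

Inductive event (R H : Type) :=
| Pr of R * H
| Rj of R * H.

Section HR.
Context {R H : finType}.
Implicit Types (I J : instance R H) (q : H -> nat) (M P X : {set R * H}).

Definition inst_ok q I : Prop :=
  (forall h, 0 < q h) /\ (forall r, uniq (rlist I r)) /\ (forall h, uniq (hlist I h)).

Definition precedes {T : eqType} (l : seq T) (x y : T) : bool :=
  [&& x \in l, y \in l & index x l < index y l].

Definition resh (h : H) M : {set R} := [set r | (r, h) \in M].
Definition res M : {set R} := [set r | [exists h, (r, h) \in M]].

Definition prop (s : seq (event R H)) : {set R * H} :=
  [set m | has (fun e => if e is Pr m' then m' == m else false) s].
Definition rej (s : seq (event R H)) : {set R * H} :=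
  [set m | has (fun e => if e is Rj m' then m' == m else false) s].
Definition tent (s : seq (event R H)) : {set R * H} := prop s :\: rej s.
Definition pend I (s : seq (event R H)) : {set R * H} :=
  [set m in tent s | m.1 \notin hlist I m.2].

Definition ousted q I M (m : R * H) : bool :=
  let: (r, h) := m in
  [&& m \in M,
      q h <= #|[set r' in resh h M | r' \in hlist I h]| &
      (r \notin hlist I h) ||
      (q h <= #|[set r' in resh h M | precedes (hlist I h) r' r]|)].

Definition step_ok q I (s : seq (event R H)) (e : event R H) : bool :=
  match e with
  | Pr (r, h) =>
      [&& r \notin res (tent s), (r, h) \notin prop s, h \in rlist I r &
          all (fun h' => (r, h') \in rej s) (take (index h (rlist I r)) (rlist I r))]
  | Rj m => ousted q I (prop s) m && (m \notin rej s)
  end.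

Inductive feasible q I : seq (event R H) -> Prop :=
| feas_nil : feasible q I [::]
| feas_rcons s e : feasible q I s -> step_ok q I s e -> feasible q I (rcons s e).

Definition maximal q I (s : seq (event R H)) : Prop :=
  feasible q I s /\ (forall t, feasible q I (s ++ t) -> t = [::]).

(* "any maximal I-feasible sequence": a chosen one *)
Definition maxseq q I : seq (event R H) :=
  epsilon (inhabits [::]) (maximal q I).

Definition propI q I := prop (maxseq q I).
Definition rejI q I := rej (maxseq q I).
Definition tentI q I := tent (maxseq q I).
Definition pendI q I := pend I (maxseq q I).

Definition resident_minimal q I : Prop :=
  propI q I = [set m | m.2 \in rlist I m.1].

Definition hospital_complete I : Prop := forall h r, r \in hlist I h.

Definition extension I J : Prop :=
  (forall r, prefix (rlist I r) (rlist J r)) /\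
  (forall h, prefix (hlist I h) (hlist J h)).

Definition resident_changeless I J : Prop := forall r, rlist J r = rlist I r.

Definition presc_P1_P5 q I P X : Prop :=
  [/\ P :&: propI q I = set0,
      (forall r h h', (r, h) \in P -> (r, h') \in P -> h = h'),
      X \subset tentI q I,
      res P :&: res (tentI q I) \subset res X &
      (forall h, #|resh h (P :|: (tentI q I :\: X))| <= q h /\
                 (resh h X != set0 -> #|resh h (P :|: (tentI q I :\: X))| = q h))].

(* general prescription (with (P6')) for a resident-minimal instance *)
Definition prescription q I P X : Prop :=
  [/\ resident_minimal q I, presc_P1_P5 q I P X &
      forall h,
        (forall r r', r \in resh h (P :|: ((tentI q I :\: pendI q I) :\: X)) ->
                      r' \in resh h (X :\: pendI q I) ->
                      precedes (hlist I h) r r') /\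
        (resh h (X :\: pendI q I) != set0 -> resh h (pendI q I) \subset resh h X)].

(* prescription for a hospital-complete resident-minimal instance (with (P6)) *)
Definition prescription_hc q I P X : Prop :=
  [/\ resident_minimal q I, presc_P1_P5 q I P X &
      forall h r r', r \in resh h (P :|: (tentI q I :\: X)) ->
                     r' \in resh h X -> precedes (hlist I h) r r'].

End HR.

(* Complete every hospital's list by appending the residents missing from it:
   first those r with (r, h) in P or (r, h) pending and outside X, then all the
   others.  Resident lists are unchanged and I is resident-minimal, so the
   completed instance has the same proposals, and extending hospital lists can
   only add rejections.  A match (r, h) that is tentative in I but rejected in
   the completion must be pending (a listed r would already be ousted in I),
   hence is appended among the first residents; it then ranks before every
   unlisted resident prescribed to h by X, which would therefore be ousted too,
   while a listed prescribed resident forces, by (P6'), all pending matches at h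
   into X.  So as long as a match of X survives at h, the tentative matches at
   h outside X survive as well, which preserves the quota equalities of (P5);
   (P6) for the completion follows from (P6') on listed residents and from the
   order of the two appended segments otherwise. *)

From mathcomp Require Import all_boot zify.
From Stdlib Require Import ClassicalEpsilon Classical.

Set Implicit Arguments.
Unset Strict Implicit.
Unset Printing Implicit Defensive.

Section EventSequences.
Context {R H : finType}.
Implicit Types (I : instance R H) (q : H -> nat) (M N : {set R * H}).
Implicit Types (s t : seq (event R H)) (m : R * H).

Lemma prop_nil : prop [::] = set0 :> {set R * H}.
Proof. by apply/setP => x; rewrite !inE. Qed.

Lemma rej_nil : rej [::] = set0 :> {set R * H}.
Proof. by apply/setP => x; rewrite !inE. Qed.

Lemma prop_rcons_Pr s m : prop (rcons s (Pr m)) = m |: prop s.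
Proof. by apply/setP => x; rewrite !inE has_rcons /= eq_sym. Qed.

Lemma prop_rcons_Rj s m : prop (rcons s (Rj m)) = prop s.
Proof. by apply/setP => x; rewrite !inE has_rcons. Qed.

Lemma rej_rcons_Pr s m : rej (rcons s (Pr m)) = rej s.
Proof. by apply/setP => x; rewrite !inE has_rcons. Qed.

Lemma rej_rcons_Rj s m : rej (rcons s (Rj m)) = m |: rej s.
Proof. by apply/setP => x; rewrite !inE has_rcons /= eq_sym. Qed.

Lemma ousted_mem q I M m : ousted q I M m -> m \in M.
Proof. by case: m => r h /and3P[]. Qed.

Lemma ousted_subset q I M N m : M \subset N -> ousted q I M m -> ousted q I N m.
Proof.
case: m => r h sMN /and3P[mM enough before]; rewrite /= (subsetP sMN) //=.
have grow (p : pred R) : #|[set r' in resh h M | p r']| <= #|[set r' in resh h N | p r']|.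
  by apply/subset_leq_card/subsetP => x; rewrite !inE => /andP[/(subsetP sMN) -> ->].
rewrite (leq_trans enough (grow _)) /=.
by case/orP: before => [->|b]; rewrite ?(leq_trans b (grow _)) ?orbT.
Qed.

Lemma rej_sub_prop q I s : feasible q I s -> rej s \subset prop s.
Proof.
elim=> [|{}s [m|m] _ IH]; first by rewrite rej_nil sub0set.
- by rewrite prop_rcons_Pr rej_rcons_Pr => _; rewrite (subset_trans IH) ?subsetUr.
- rewrite prop_rcons_Rj rej_rcons_Rj => /andP[/ousted_mem mP _].
  by rewrite subUset sub1set mP.
Qed.

Lemma rej_ousted q I s m : feasible q I s -> m \in rej s -> ousted q I (prop s) m.
Proof.
move=> Hs; elim: Hs m => [|{}s [m0|m0] _ IH Hstep] m; first by rewrite rej_nil inE.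
- rewrite prop_rcons_Pr rej_rcons_Pr => /IH; apply: ousted_subset; exact: subsetUr.
- case/andP: Hstep => Hm0 _; rewrite prop_rcons_Rj rej_rcons_Rj in_setU1.
  by case/orP => [/eqP-> | /IH].
Qed.

Lemma prop_rlist q I s r h : feasible q I s -> (r, h) \in prop s -> h \in rlist I r.
Proof.
elim=> [|{}s [[r0 h0]|m] _ IH]; first by rewrite prop_nil inE.
- by case/and4P=> _ _ h0r _; rewrite prop_rcons_Pr in_setU1 => /orP[/eqP[-> ->]|/IH].
- by rewrite prop_rcons_Rj.
Qed.

Lemma rej_preferred q I s r h h' : feasible q I s -> (r, h') \in prop s ->
  index h (rlist I r) < index h' (rlist I r) -> (r, h) \in rej s.
Proof.
elim=> [|{}s [[r0 h0]|m] _ IH]; first by rewrite prop_nil inE.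
- case/and4P=> _ _ _ /allP earlier; rewrite prop_rcons_Pr rej_rcons_Pr in_setU1.
  case/orP=> [/eqP[-> ->] lt|]; last exact: IH.
  have hr : h \in rlist I r0 by by rewrite -index_mem (leq_trans lt) ?index_size.
  by apply: earlier; rewrite in_take.
- by rewrite prop_rcons_Rj rej_rcons_Rj in_setU1 => _ hp /(IH hp) ->; rewrite orbT.
Qed.

Lemma tent_functional q I s r h h' :
  feasible q I s -> (r, h) \in tent s -> (r, h') \in tent s -> h = h'.
Proof.
elim=> [|{}s [[r0 h0]|m] _ IH]; first by rewrite /tent prop_nil !inE andbF.
- case/and4P=> free _ _ _.
  have new h1 : (r, h1) \in tent (rcons s (Pr (r0, h0))) ->
      (r, h1) = (r0, h0) \/ (r, h1) \in tent s /\ r != r0.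
    rewrite /tent prop_rcons_Pr rej_rcons_Pr in_setD in_setU1.
    case/andP=> nrej /orP[/eqP->|hp]; first by left.
    right; rewrite in_setD nrej hp; split=> //; apply: contraNneq free => <-.
    by rewrite inE; apply/existsP; exists h1; rewrite in_setD nrej hp.
  move=> /new[e1|[t1 n1]] /new[e2|[t2 n2]].
  + by case: e1 e2 => _ -> [_ ->].
  + by case: e1 n2 => -> _; rewrite eqxx.
  + by case: e2 n1 => -> _; rewrite eqxx.
  + exact: IH.
- rewrite /tent prop_rcons_Rj rej_rcons_Rj !in_setD !in_setU1 => _.
  by case/andP=> /norP[_ a] b /andP[/norP[_ c] d]; apply: IH; rewrite in_setD ?a ?b ?c ?d.
Qed.

Lemma size_feasible q I s : feasible q I s -> size s = #|prop s| + #|rej s|.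
Proof.
elim=> [|{}s [[r h]|m] _ IH]; rewrite ?prop_nil ?rej_nil ?cards0 // size_rcons IH.
- by case/and4P=> _ nprop _ _; rewrite prop_rcons_Pr rej_rcons_Pr cardsU1 nprop.
- by case/andP=> _ nrej; rewrite prop_rcons_Rj rej_rcons_Rj cardsU1 nrej addnS.
Qed.

Lemma maximal_stuck q I t e : maximal q I t -> ~~ step_ok q I t e.
Proof.
case=> Ht tmax; apply/negP => He.
by have := tmax [:: e]; rewrite cats1 => /(_ (feas_rcons Ht He)).
Qed.

Lemma exists_maximal q I : exists t, maximal q I t.
Proof.
pose N := 2 * #|{: R * H}|.
have bound s : feasible q I s -> size s <= N.
  by move/size_feasible->; rewrite /N mul2n -addnn leq_add ?max_card.
suff: forall n s, feasible q I s -> N - size s < n -> exists t, maximal q I t.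
  by move=> /(_ N.+1 [::] (feas_nil q I)); apply; rewrite ltnS leq_subr.
elim=> [|n IH] s Hs lt //.
have [smax|] := classic (forall t, feasible q I (s ++ t) -> t = [::]).
  by exists s.
case/not_all_ex_not=> t nmax; have [Hst tnil] := imply_to_and _ _ nmax.
apply: (IH _ Hst).
have := bound _ Hst; rewrite size_cat.
have : 0 < size t by case: t tnil {Hst nmax}.
lia.
Qed.

Lemma maxseq_maximal q I : maximal q I (maxseq q I).
Proof. exact: epsilon_spec (exists_maximal q I). Qed.

Lemma maximal_rej_closed q I t m :
  maximal q I t -> ousted q I (prop t) m -> m \in rej t.
Proof.
move=> tmax mout; apply: contraT => nrej.
by have := maximal_stuck (Rj m) tmax; rewrite /= mout nrej.
Qed.

Lemma maximal_prop_closed q I t r h : maximal q I t -> h \in rlist I r ->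
  all (fun h' => (r, h') \in rej t) (take (index h (rlist I r)) (rlist I r)) ->
  (r, h) \in prop t.
Proof.
move=> tmax hr earlier; apply: contraT => nprop.
have Ht := tmax.1.
have free : r \notin res (tent t).
  apply/negP; rewrite inE => /existsP[h' /setDP[hp' nrej']].
  have h'r := prop_rlist Ht hp'.
  case: (ltngtP (index h' (rlist I r)) (index h (rlist I r))) => [lt|gt|eq].
  - by move/allP: earlier => /(_ h'); rewrite in_take // lt (negPf nrej') => /(_ isT).
  - by move: nprop; rewrite (subsetP (rej_sub_prop Ht)) ?(rej_preferred Ht hp' gt).
  - by move: hp'; rewrite -(nth_index h h'r) eq nth_index // (negPf nprop).
by have := maximal_stuck (Pr (r, h)) tmax; rewrite /= free nprop hr earlier.
Qed.

Lemma feasible_sub_maximal q I s t : feasible q I s -> maximal q I t ->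
  prop s \subset prop t /\ rej s \subset rej t.
Proof.
move=> Hs tmax; elim: Hs => [|{}s [[r h]|m] _ [sp sr]].
- by rewrite prop_nil rej_nil !sub0set.
- case/and4P=> _ _ hr /allP earlier; rewrite prop_rcons_Pr rej_rcons_Pr subUset sp.
  rewrite sub1set andbT; split=> //; apply: (maximal_prop_closed tmax hr).
  by apply/allP => h' /earlier /(subsetP sr).
- case/andP=> mout _; rewrite prop_rcons_Rj rej_rcons_Rj subUset sub1set sr andbT.
  by split=> //; apply: maximal_rej_closed (ousted_subset sp mout).
Qed.

Lemma in_rejI q I m : (m \in rejI q I) = (m \in propI q I) && ousted q I (propI q I) m.
Proof.
have [Ht _] := maxseq_maximal q I.
apply/idP/andP => [mrej|[_]]; last exact/maximal_rej_closed/maxseq_maximal.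
by split; [exact: (subsetP (rej_sub_prop Ht)) | exact: rej_ousted].
Qed.

Lemma propI_rlist q I r h : (r, h) \in propI q I -> h \in rlist I r.
Proof. exact/prop_rlist/(maxseq_maximal q I).1. Qed.

Lemma tentI_functional q I r h h' :
  (r, h) \in tentI q I -> (r, h') \in tentI q I -> h = h'.
Proof. exact/tent_functional/(maxseq_maximal q I).1. Qed.

Lemma in_pendI q I m :
  (m \in pendI q I) = (m \in tentI q I) && (m.1 \notin hlist I m.2).
Proof. by rewrite inE. Qed.

End EventSequences.

Section Precedes.
Variable T : eqType.
Implicit Types (l e : seq T) (a b c : T).

Lemma precedes_mem l a b : precedes l a b -> a \in l.
Proof. by case/and3P. Qed.

Lemma precedes_trans l a b c : precedes l a b -> precedes l b c -> precedes l a c.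
Proof.
by case/and3P=> al _ ab /and3P[_ cl bc]; rewrite /precedes al cl (ltn_trans ab bc).
Qed.

Lemma precedes_catl l e a b : precedes l a b -> precedes (l ++ e) a b.
Proof.
by case/and3P=> al bl ab; rewrite /precedes !mem_cat al bl !index_cat al bl.
Qed.

Lemma precedes_cat_mid l e a b :
  a \in l -> b \notin l -> b \in e -> precedes (l ++ e) a b.
Proof.
move=> al bl be; rewrite /precedes !mem_cat al be orbT !index_cat al (negPf bl) /=.
by rewrite (leq_trans _ (leq_addr _ _)) ?index_mem.
Qed.

Lemma precedes_catr l e a b :
  a \notin l -> b \notin l -> precedes e a b -> precedes (l ++ e) a b.
Proof.
move=> al bl /and3P[ae be ab].
by rewrite /precedes !mem_cat ae be !orbT !index_cat (negPf al) (negPf bl) ltn_add2l.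
Qed.

Lemma precedes_cat_listed l e a b :
  b \in l -> precedes (l ++ e) a b = precedes l a b.
Proof.
move=> bl; rewrite /precedes !mem_cat bl !index_cat bl /=.
case: (a \in l) => //=.
by rewrite ltnNge (leq_trans _ (leq_addr _ _)) ?andbF // ltnW // index_mem.
Qed.

End Precedes.

Section Ousting.
Context {R H : finType}.
Implicit Types (I J : instance R H) (q : H -> nat) (M : {set R * H}).

Lemma mem_resh h M r : (r \in resh h M) = ((r, h) \in M).
Proof. by rewrite inE. Qed.

Lemma resh_subset h (A B : {set R * H}) : A \subset B -> resh h A \subset resh h B.
Proof. by move=> sAB; apply/subsetP => r; rewrite !mem_resh => /(subsetP sAB). Qed.

Lemma mem_res M r : (r \in res M) = [exists h, (r, h) \in M].
Proof. by rewrite inE. Qed.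

Lemma leq_card_resh M h (p p' : pred R) : (forall r, p r -> p' r) ->
  #|[set r in resh h M | p r]| <= #|[set r in resh h M | p' r]|.
Proof.
by move=> pp'; apply/subset_leq_card/subsetP => r; rewrite !inE => /andP[-> /pp'].
Qed.

Lemma ousted_precedes q I M r y h : precedes (hlist I h) r y -> (y, h) \in M ->
  ousted q I M (r, h) -> ousted q I M (y, h).
Proof.
move=> ry yM /and3P[_ enough]; rewrite (precedes_mem ry) /= => before.
rewrite /= yM enough /=; apply/orP; right; apply: (leq_trans before).
by apply: leq_card_resh => x /precedes_trans; apply.
Qed.

End Ousting.

Section Extension.
Context {R H : finType}.
Variables I J : instance R H.
Hypothesis hlist_prefix : forall h, prefix (hlist I h) (hlist J h).

Lemma ousted_extension q M m : ousted q I M m -> ousted q J M m.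
Proof.
case: m => r h; rewrite /ousted; have [e ->] := prefixP (hlist_prefix h).
case/and3P=> mM enough before; rewrite mM /=.
have onI_onJ x : x \in hlist I h -> x \in hlist I h ++ e by rewrite mem_cat => ->.
rewrite (leq_trans enough (leq_card_resh _ _ onI_onJ)) /=.
have [rI|rnI] := boolP (r \in hlist I h).
  apply/orP; right; move: before; rewrite rI /= => /leq_trans; apply.
  by apply: leq_card_resh => x /precedes_catl.
rewrite mem_cat (negPf rnI) /=; case re: (r \in e) => //=.
apply: (leq_trans enough); apply: leq_card_resh => x xI.
exact: precedes_cat_mid.
Qed.

Lemma ousted_extension_listed q M r h :
  r \in hlist I h -> ousted q J M (r, h) -> ousted q I M (r, h).
Proof.
rewrite /ousted; have [e ->] := prefixP (hlist_prefix h) => rI /and3P[mM _].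
rewrite mem_cat rI /= => before.
have before_I : q h <= #|[set x in resh h M | precedes (hlist I h) x r]|.
  by move: before; under eq_finset => x do rewrite precedes_cat_listed //.
rewrite mM before_I (leq_trans before_I) //.
by apply: leq_card_resh => x /precedes_mem.
Qed.

Hypothesis same_rlist : resident_changeless I J.

Lemma feasible_extension q s : feasible q I s -> feasible q J s.
Proof.
elim=> [|{}s [[r h]|m] _ IH step]; first exact: feas_nil.
- by apply: feas_rcons; rewrite //= same_rlist.
- by case/andP: step => mout nrej; apply: feas_rcons; rewrite //= nrej ousted_extension.
Qed.

Lemma propI_rejI_extension q :
  propI q I \subset propI q J /\ rejI q I \subset rejI q J.
Proof.
exact: feasible_sub_maximal (feasible_extension (maxseq_maximal q I).1)
  (maxseq_maximal q J).
Qed.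

End Extension.

Section Completion.
Context {R H : finType}.
Variables (I : instance R H) (first : H -> pred R).

Definition missing h (b : bool) : seq R :=
  [seq r <- enum R | (r \notin hlist I h) && (first h r == b)].

Definition completion : instance R H :=
  Inst (rlist I) (fun h => hlist I h ++ missing h true ++ missing h false).

Lemma mem_missing h b r : (r \in missing h b) = (r \notin hlist I h) && (first h r == b).
Proof. by rewrite mem_filter mem_enum andbT. Qed.

Lemma completion_complete : hospital_complete completion.
Proof.
move=> h r; rewrite !mem_cat !mem_missing.
by case: (r \in hlist I h); case: (first h r).
Qed.

Lemma completion_ok q : inst_ok q I -> inst_ok q completion.
Proof.
case=> qpos [runiq huniq]; split=> //; split=> // h.
have missing_uniq b : uniq (missing h b) by rewrite filter_uniq ?enum_uniq.
rewrite /= !cat_uniq huniq !missing_uniq /= andbT; apply/andP; split.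
  by apply/hasP => -[r]; rewrite mem_cat !mem_missing => /orP[]/andP[/negPf->].
by apply/hasP => -[r]; rewrite !mem_missing => /andP[_ /eqP->] /andP[_ /eqP].
Qed.

Lemma completion_extension : extension I completion.
Proof. by split=> [r|h]; [exact: prefix_refl | exact: prefix_prefix]. Qed.

Lemma completion_changeless : resident_changeless I completion.
Proof. by []. Qed.

Lemma precedes_completion h r r' :
  precedes (hlist I h) r r' -> precedes (hlist completion h) r r'.
Proof. exact: precedes_catl. Qed.

Lemma precedes_completion_unlisted h r r' : r \in hlist I h -> r' \notin hlist I h ->
  precedes (hlist completion h) r r'.
Proof.
move=> rI r'I; apply: precedes_cat_mid; rewrite // !mem_cat !mem_missing r'I.
by case: (first h r').
Qed.

Lemma precedes_completion_first h r r' : r \notin hlist I h -> r' \notin hlist I h ->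
  first h r -> ~~ first h r' -> precedes (hlist completion h) r r'.
Proof.
move=> rI r'I fr fr'; apply: precedes_catr => //.
by apply: precedes_cat_mid; rewrite !mem_missing ?rI ?r'I ?fr ?(negPf fr').
Qed.

End Completion.

Definition favoured {R H : finType} (P X pd : {set R * H}) : H -> pred R :=
  fun h r => ((r, h) \in P) || ((r, h) \in pd :\: X).

Section Prescription.
Context {R H : finType}.
Variables (q : H -> nat) (I : instance R H) (P X : {set R * H}).
Hypothesis minI : resident_minimal q I.
Hypothesis P1 : P :&: propI q I = set0.
Hypothesis P3 : X \subset tentI q I.
Hypothesis P4 : res P :&: res (tentI q I) \subset res X.
Hypothesis P5 : forall h, #|resh h (P :|: (tentI q I :\: X))| <= q h /\
  (resh h X != set0 -> #|resh h (P :|: (tentI q I :\: X))| = q h).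
Hypothesis P6 : forall h,
  (forall r r', r \in resh h (P :|: ((tentI q I :\: pendI q I) :\: X)) ->
                r' \in resh h (X :\: pendI q I) -> precedes (hlist I h) r r') /\
  (resh h (X :\: pendI q I) != set0 -> resh h (pendI q I) \subset resh h X).

Local Notation J := (completion I (favoured P X (pendI q I))).

Lemma propI_rejI_completion : propI q I \subset propI q J /\ rejI q I \subset rejI q J.
Proof. exact: propI_rejI_extension (completion_extension _ _).2 _ q. Qed.

Lemma propJ : propI q J = propI q I.
Proof.
apply/eqP; rewrite eqEsubset propI_rejI_completion.1 andbT.
by apply/subsetP => -[r h] /propI_rlist hr; rewrite minI inE.
Qed.

Lemma minJ : resident_minimal q J.
Proof. by rewrite /resident_minimal propJ minI. Qed.

Lemma tentJ : tentI q J = propI q I :\: rejI q J.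
Proof. by rewrite -propJ. Qed.

Lemma tentJ_sub : tentI q J \subset tentI q I.
Proof. by rewrite tentJ setDS // propI_rejI_completion.2. Qed.

Lemma X_sub_propI : X \subset propI q I.
Proof. exact: subset_trans P3 (subsetDl _ _). Qed.

Lemma not_favoured_X r h : (r, h) \in X -> ~~ favoured P X (pendI q I) h r.
Proof.
move=> rX; rewrite /favoured in_setD rX /= orbF; apply/negP => rP.
have : (r, h) \in P :&: propI q I by rewrite inE rP (subsetP X_sub_propI).
by rewrite P1 inE.
Qed.

Lemma ousted_of_rejJ r h : (r, h) \in rejI q J -> ousted q J (propI q I) (r, h).
Proof. by rewrite in_rejI propJ => /andP[]. Qed.

Lemma rejJ_unlisted r h :
  (r, h) \in tentI q I -> (r, h) \in rejI q J -> r \notin hlist I h.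
Proof.
case/setDP=> rprop rnrej /ousted_of_rejJ rout; apply/negP => rI; apply/negP: rnrej.
by rewrite in_rejI rprop (ousted_extension_listed (completion_extension _ _).2 rI rout).
Qed.

Lemma rejJ_spares_tent r y h : (r, h) \in tentI q I :\: X ->
  (y, h) \in X :\: rejI q J -> (r, h) \notin rejI q J.
Proof.
case/setDP=> rt rnX /setDP[yX ynJ]; apply/negP => rJ.
have rI := rejJ_unlisted rt rJ.
have rpend : (r, h) \in pendI q I by rewrite in_pendI rt.
have [yI|yI] := boolP (y \in hlist I h).
  have : resh h (X :\: pendI q I) != set0.
    by apply/set0Pn; exists y; rewrite mem_resh in_setD in_pendI yI andbF.
  move=> /(P6 h).2 /subsetP /(_ r).
  by rewrite !mem_resh rpend (negPf rnX) => /(_ isT).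
apply: (negP ynJ); rewrite in_rejI propJ (subsetP X_sub_propI) //.
apply: (ousted_precedes _ (subsetP X_sub_propI _ yX) (ousted_of_rejJ rJ)).
apply: precedes_completion_first => //; last exact: not_favoured_X.
by rewrite /favoured in_setD rpend rnX orbT.
Qed.

Lemma tentJ_setD : tentI q J :\: (X :\: rejI q J) = tentI q J :\: X.
Proof.
by apply/setP => m; rewrite tentJ !in_setD; case: (m \in rejI q J); rewrite ?andbF.
Qed.

Lemma presc_J_P3 : X :\: rejI q J \subset tentI q J.
Proof.
by apply/subsetP => m /setDP[mX mnJ]; rewrite tentJ in_setD mnJ (subsetP X_sub_propI).
Qed.

Lemma presc_J_P4 : res P :&: res (tentI q J) \subset res (X :\: rejI q J).
Proof.
apply/subsetP => r; rewrite in_setI !mem_res => /andP[rP /existsP[h rtJ]].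
have rtI := subsetP tentJ_sub _ rtJ.
have /(subsetP P4) : r \in res P :&: res (tentI q I).
  by rewrite in_setI !mem_res rP; apply/existsP; exists h.
rewrite mem_res => /existsP[h' rX]; have eh := tentI_functional (subsetP P3 _ rX) rtI.
by apply/existsP; exists h; move: rtJ; rewrite tentJ !in_setD -eh rX => /andP[-> _].
Qed.

Lemma presc_J_P5 h :
  #|resh h (P :|: (tentI q J :\: (X :\: rejI q J)))| <= q h /\
  (resh h (X :\: rejI q J) != set0 ->
   #|resh h (P :|: (tentI q J :\: (X :\: rejI q J)))| = q h).
Proof.
rewrite tentJ_setD.
have sub := resh_subset h (setUS P (setSD X tentJ_sub)).
split; first exact: leq_trans (subset_leq_card sub) (P5 h).1.
case/set0Pn=> y; rewrite mem_resh => yY.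
have neX : resh h X != set0 by apply/set0Pn; exists y; rewrite mem_resh; case/setDP: yY.
suff -> : resh h (P :|: (tentI q J :\: X)) = resh h (P :|: (tentI q I :\: X)).
  exact: (P5 h).2.
apply/eqP; rewrite eqEsubset sub; apply/subsetP => r; rewrite !mem_resh !in_setU.
case/orP=> [->//|rtX]; apply/orP; right; move: (rejJ_spares_tent rtX yY).
by case/setDP: rtX => /setDP[rprop _] rnX nrej; rewrite in_setD rnX tentJ in_setD nrej.
Qed.

Lemma presc_J_P6 h r r' : r \in resh h (P :|: (tentI q J :\: (X :\: rejI q J))) ->
  r' \in resh h (X :\: rejI q J) -> precedes (hlist J h) r r'.
Proof.
rewrite tentJ_setD !mem_resh in_setU => hr /setDP[r'X _].
have tent_of_tentJ : (r, h) \in tentI q J :\: X -> (r, h) \in tentI q I :\: X.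
  by case/setDP=> /(subsetP tentJ_sub) rt rnX; apply/setDP.
have [r'I|r'I] := boolP (r' \in hlist I h).
  have r'Xp : r' \in resh h (X :\: pendI q I).
    by rewrite mem_resh in_setD in_pendI r'I andbF.
  have pendX : resh h (pendI q I) \subset resh h X.
    by apply: (P6 h).2; apply/set0Pn; exists r'.
  apply/precedes_completion/((P6 h).1 _ _ ^~ r'Xp); rewrite mem_resh in_setU.
  case/orP: hr => [->//|/tent_of_tentJ /setDP[rt rnX]]; apply/orP; right.
  apply/setDP; split=> //; apply/setDP; split=> //; apply: contra rnX => rpend.
  by rewrite -mem_resh (subsetP pendX) ?mem_resh.
have [rI|rI] := boolP (r \in hlist I h); first exact: precedes_completion_unlisted.
apply: precedes_completion_first => //; last exact: not_favoured_X.
case/orP: hr => [rP|/tent_of_tentJ /setDP[rt rnX]]; rewrite /favoured ?rP //.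
by rewrite in_setD rnX in_pendI rt rI orbT.
Qed.

End Prescription.

Theorem lemma4 (R H : finType) (q : H -> nat) (I : instance R H)
    (P X : {set R * H}) :
  inst_ok q I ->
  resident_minimal q I ->
  prescription q I P X ->
  exists I' : instance R H,
    [/\ inst_ok q I', extension I I', resident_changeless I I',
        hospital_complete I' &
        prescription_hc q I' P (X :\: rejI q I')].
Proof.
move=> okI minI [_ [P1 P2 P3 P4 P5] P6].
exists (completion I (favoured P X (pendI q I))); split.
- exact: completion_ok.
- exact: completion_extension.
- exact: completion_changeless.
- exact: completion_complete.
split; [exact: minJ | split | exact: presc_J_P6].
- by rewrite propJ.
- exact: P2.
- exact: presc_J_P3.
- exact: presc_J_P4.
- exact: presc_J_P5.
Qed.
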